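(* Under the standing setup, there exists a polynomial $p_4(x)$ such that for all sufficiently large $n$ and all $1\le j\le 2\ell$, $$\mu\otimes\mu\bigl(Q^j_{n,k}\bigr)\le p_4(n)^{k/n}e^{-2n(h(\mu)-\delta)}\gamma^{2\ell-j}.$$
   Context: Standing setup. $\mathcal{A}$ is a finite alphabet, $X\subset\mathcal{A}^{\mathbb{Z}}$ a non-trivial topologically mixing SFT with left shift $\sigma$, $f:X\to\mathbb{R}$ H\''older continuous with pressure $P=P_X(f)$, and $\mu$ the Gibbs measure (unique equilibrium state) of $f$, with entropy $h(\mu)$. $B_m(X)$ is the set of words of length $m$ in $X$; $[w]=\{x\in X:x_0\dots x_{|w|-1}=w\}$, $\mu(w)=\mu([w])$, and $\mu\otimes\mu(S)=\sum_{(u,v)\in S}\mu(u)\mu(v)$. Words are written $u=u_1\dots u_k$, $u_i^j=u_i\dots u_j$. $K>1$ is a constant such that: (i) for all $m\ge1$, $x\in X$: $K^{-1}\le\mu(x_0\dots x_{m-1})/\exp(-Pm+\sum_{i=0}^{m-1}f(\sigma^ix))\le K$; (ii) $\mu(uv)\le K\mu(u)\mu(v)$ and $\mu(\sigma^{-|u|}[v]\mid[u])\le K\mu(v)$ whenever $uv\in B(X)$. $\gamma_0=\inf\{\gamma>0:\exists n_0\ \forall m\ge n_0\ \forall u\in B_m(X),\ \mu(u)\le\gamma^m\}$. Parameters: $\alpha\in(\gamma_0,1]$; $\gamma\in(\gamma_0,\alpha)$; $n_0$ such that $\mu(u)\le\gamma^{|u|}$ for all $u\in B(X)$ with $|u|\ge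 n_0$; $n\ge n_0$; $0<\delta<\frac14\log(\alpha/\gamma)$; $k=k(n)$ with $n/k\to0$ and $k=o(n^2/\log n)$; $\ell=k-n+1$. For a word $u$ of length $\ge n$, $W_n(u)$ is the set of distinct subwords of $u$ of length $n$. $E_n=\{u\in B_n(X):|-\frac1n\log\mu(u)-h(\mu)|<\delta\}$, $G_{n,k}=\{u\in B_k(X): u_1^n=u_\ell^k\text{ and }u_1^n\in E_n\}$, $Q_{n,k}=\{(u,v)\in G_{n,k}\times G_{n,k}: W_n(u)\cap W_n(v)\neq\emptyset\}$, and $Q^j_{n,k}=\{(u,v)\in Q_{n,k}:|W_n(u)\cup W_n(v)|=j\}$. *)

From Stdlib Require Import Reals ZArith ClassicalEpsilon.
From mathcomp Require Import all_boot.
Set Implicit Arguments.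
Unset Strict Implicit.
Unset Printing Implicit Defensive.

Local Open Scope R_scope.

Definition shiftn (A : Type) (i : nat) (x : Z -> A) : Z -> A :=
  fun t => x (t + Z.of_nat i)%Z.

Definition wordAt (A : Type) (x : Z -> A) (i : Z) (m : nat) : seq A :=
  mkseq (fun t => x (i + Z.of_nat t)%Z) m.

Definition inSFT (A : eqType) (F : seq (seq A)) (x : Z -> A) : Prop :=
  forall (i : Z) (w : seq A), w \in F -> wordAt x i (size w) <> w.

Definition inB (A : eqType) (F : seq (seq A)) (w : seq A) : Prop :=
  exists x, inSFT F x /\ wordAt x 0 (size w) = w.

Definition topMixing (A : eqType) (F : seq (seq A)) : Prop :=
  forall u v, inB F u -> inB F v ->
    exists N, forall m, (N <= m)%N -> exists w, size w = m /\ inB F (u ++ w ++ v).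

Definition nontrivialSFT (A : eqType) (F : seq (seq A)) : Prop :=
  exists x y, inSFT F x /\ inSFT F y /\ x <> y.

(* Hoelder continuity on X w.r.t. the metric d(x,y) = 2^{-min{|i| : x_i <> y_i}} *)
Definition holderOn (A : eqType) (F : seq (seq A)) (f : (Z -> A) -> R) : Prop :=
  exists C theta, 0 <= C /\ 0 < theta < 1 /\
    forall x y (N : nat), inSFT F x -> inSFT F y ->
      (forall i : Z, (Z.abs i < Z.of_nat N)%Z -> x i = y i) ->
      Rabs (f x - f y) <= C * theta ^ N.

Definition sumR (T : Type) (s : seq T) (g : T -> R) : R :=
  foldr (fun t acc => g t + acc) 0 s.

Fixpoint words (A : finType) (m : nat) : seq (seq A) :=
  match m with
  | O => [:: [::]]
  | S m' => flatten [seq [seq a :: w | w <- words A m'] | a <- enum A]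
  end.

Definition ind (P : Prop) : R :=
  if excluded_middle_informative P then 1 else 0.

Definition birkhoff (A : Type) (f : (Z -> A) -> R) (x : Z -> A) (m : nat) : R :=
  sumR (iota 0 m) (fun i => f (shiftn i x)).

(* A shift-invariant Borel probability measure on X, given by its values on
   cylinders [w] (Kolmogorov consistency + shift invariance + support in X). *)
Definition invMeasureOn (A : finType) (F : seq (seq A)) (mu : seq A -> R) : Prop :=
  (forall w, 0 <= mu w) /\ mu [::] = 1 /\
  (forall w, mu w = sumR (enum A) (fun a => mu (rcons w a))) /\
  (forall w, mu w = sumR (enum A) (fun a => mu (a :: w))) /\
  (forall w, ~ inB F w -> mu w = 0).

Definition gibbsProp (A : finType) (F : seq (seq A)) (f : (Z -> A) -> R)
    (P : R) (mu : seq A -> R) (K : R) : Prop :=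
  forall (m : nat) (x : Z -> A), (1 <= m)%N -> inSFT F x ->
    / K <= mu (wordAt x 0 m) / exp (- P * INR m + birkhoff f x m) <= K.

Definition quasiBernoulli (A : finType) (F : seq (seq A)) (mu : seq A -> R) (K : R) : Prop :=
  forall u v, inB F (u ++ v) ->
    mu (u ++ v) <= K * mu u * mu v /\ mu (u ++ v) / mu u <= K * mu v.

(* Kolmogorov-Sinai entropy of mu, as the limit of H(partition into m-cylinders)/m *)
Definition isEntropy (A : finType) (mu : seq A -> R) (h : R) : Prop :=
  Un_cv (fun m => - (/ INR (S m)) * sumR (words A (S m)) (fun w => mu w * ln (mu w))) h.

Definition gamma0Set (A : finType) (F : seq (seq A)) (mu : seq A -> R) (g : R) : Prop :=
  0 < g /\ exists n0 : nat, forall (m : nat) (u : seq A),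
    (n0 <= m)%N -> size u = m -> inB F u -> mu u <= g ^ m.

Definition isInf (S : R -> Prop) (a : R) : Prop :=
  (forall g, S g -> a <= g) /\ (forall b, (forall g, S g -> b <= g) -> b <= a).

(* W_n(u): the list of length-n subwords of u (with repetitions; distinctness via undup) *)
Definition subwords (A : eqType) (n : nat) (u : seq A) : seq (seq A) :=
  [seq take n (drop i u) | i <- iota 0 (size u - n).+1].

Definition E_set (A : finType) (F : seq (seq A)) (mu : seq A -> R) (h delta : R)
    (n : nat) (w : seq A) : Prop :=
  inB F w /\ size w = n /\ Rabs (- (/ INR n) * ln (mu w) - h) < delta.

(* G_{n,k}; u_1^n = take n u, u_l^k (l = k-n+1) = drop (k-n) u *)
Definition G_set (A : finType) (F : seq (seq A)) (mu : seq A -> R) (h delta : R)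
    (n k : nat) (u : seq A) : Prop :=
  size u = k /\ inB F u /\ take n u = drop (k - n) u /\ E_set F mu h delta n (take n u).

Definition Q_set (A : finType) (F : seq (seq A)) (mu : seq A -> R) (h delta : R)
    (n k j : nat) (u v : seq A) : Prop :=
  G_set F mu h delta n k u /\ G_set F mu h delta n k v /\
  has (fun w => w \in subwords n v) (subwords n u) /\
  size (undup (subwords n u ++ subwords n v)) = j.

Definition muPair (A : finType) (mu : seq A -> R) (k : nat)
    (S : seq A -> seq A -> Prop) : R :=
  sumR (words A k) (fun u => sumR (words A k) (fun v => ind (S u v) * (mu u * mu v))).

(* evaluation of the real polynomial with coefficient list c (constant term first) *)
Definition peval (c : seq R) (x : R) : R := foldr (fun a acc => a + x * acc) 0 c.

(* A pair (u, v) in Q^j_{n,k} splits j = a + (j - a), where a counts the distinct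
   length-n subwords of u and j - a those of v not occurring in u. A word of
   G_{n,k} whose subwords are mostly already known is very repetitive: cut it
   from the right into windows of length n; in each window the letters from the
   first known subword on are determined by a code (which known subword, or
   which earlier position, then continued periodically), and there are only
   polynomially many codes per window. Conditioning block by block with the
   quasi-Bernoulli property, each determined letter costs a factor gamma, the
   initial block in E_n costs e^{-n(h - delta)}, and each of the O(k/n) windows
   costs a polynomial factor in n, which gives p_4(n)^{k/n}. *)

From Stdlib Require Import Reals ZArith Lra Lia ClassicalEpsilon.
From mathcomp Require Import all_boot zify.
Set Implicit Arguments.
Unset Strict Implicit.

Lemma subwords_size (A : eqType) n (v : seq A) : size (subwords n v) = (size v - n).+1.
Proof. by rewrite /subwords size_map size_iota. Qed.

Lemma subwords_nth (A : eqType) n (v : seq A) i : i <= size v - n ->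
  nth [::] (subwords n v) i = take n (drop i v).
Proof. by move=> Hi; rewrite /subwords (nth_map 0) ?size_iota ?nth_iota //; lia. Qed.

Lemma size_undup_rcons (T : eqType) (t : seq T) x :
  size (undup (rcons t x)) = size (undup t) + (x \notin t).
Proof.
rewrite undup_rcons size_rcons size_filter.
have := count_predC (pred1 x) (undup t).
have -> : count (pred1 x) (undup t) = (x \in t) by rewrite count_uniq_mem ?undup_uniq // mem_undup.
have -> : count (predC1 x) (undup t) = count (predC (pred1 x)) (undup t).
  by apply: eq_count => y /=; rewrite eq_sym.
by case: (x \in t) => /=; lia.
Qed.

Lemma size_undup_cat (T : eqType) (s1 s2 : seq T) :
  size (undup (s1 ++ s2)) = size (undup s1) + size (undup [seq x <- s2 | x \notin s1]).
Proof.
have E : s1 ++ s2 =i [seq x <- s2 | x \notin s1] ++ s1.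
  by move=> y; rewrite !mem_cat mem_filter; case: (y \in s1); case: (y \in s2).
rewrite (perm_size (perm_undup E)) undup_cat size_cat addnC.
congr (_ + _); congr size; apply/all_filterP/allP => y.
by rewrite mem_undup mem_filter => /andP [].
Qed.

Definition seen_at (T : eqType) (d : T) (S W : seq T) (i : nat) : bool :=
  (nth d W i \in S) || (nth d W i \in take i W).

(* Every position of W is either seen or the first occurrence of an entry unseen in S. *)
Lemma undup_unseen_add_count_seen (T : eqType) (d : T) (S W : seq T) :
  size (undup [seq x <- W | x \notin S]) + count (seen_at d S W) (iota 0 (size W)) = size W.
Proof.
elim/last_ind: W => [|W x IH] //.
rewrite size_rcons -addn1 iotaD count_cat add0n /=.
have -> : count (seen_at d S (rcons W x)) (iota 0 (size W)) = count (seen_at d S W) (iota 0 (size W)).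
  apply: eq_in_count => i; rewrite mem_iota add0n => /andP [_ Hi].
  by rewrite /seen_at nth_rcons Hi -cats1 takel_cat // ltnW.
rewrite /seen_at nth_rcons ltnn eqxx -cats1 takel_cat // take_size cats1 filter_rcons.
move: IH; rewrite /seen_at; case: (boolP (x \in S)) => HxS /= IH; first lia.
by rewrite size_undup_rcons mem_filter HxS /=; case: (x \in W) => /=; lia.
Qed.

Lemma count_find (T : Type) (a : pred T) s : count a s <= size s - find a s.
Proof. elim: s => [|x s IH] //=; case: (a x) => /=; last lia. by rewrite subn0 add1n ltnS count_size. Qed.

Lemma nth_periodic (A : Type) (a0 : A) (v : seq A) p y n : p < y ->
  (forall t, t < n -> nth a0 v (p + t) = nth a0 v (y + t)) ->
  forall t, t < n -> nth a0 v (y + t) = nth a0 v (p + t %% (y - p)).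
Proof.
move=> Hpy H t; elim: t {-2}t (leqnn t) => [|N IH] t Ht Htn.
  have -> : t = 0 by lia.
  by rewrite mod0n -H //; lia.
case: (ltnP t (y - p)) => Hty; first by rewrite modn_small // -H.
rewrite -H // (_ : p + t = y + (t - (y - p))); last lia.
rewrite IH; [|lia|lia]; congr (nth _ _ (_ + _)).
by rewrite -{2}(subnK Hty) modnDr.
Qed.

(* Coding of a word from right to left by windows of length [n]. In the window
   [lo, Lp) the letters before the first position y at which the length-[n]
   subword is seen are free; those from y on are fixed by the code of that
   subword (index in S, or size S + its earlier position p), the latter because
   the word then has period y - p. A code entry is (y - lo, code). *)
Definition decode_block (A : Type) (a0 : A) (S : seq (seq A)) (c d : nat) (pre : seq A) : seq A :=
  if c < size S then take d (nth [::] S c)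
  else mkseq (fun t => nth a0 pre ((c - size S) + t %% (size pre - (c - size S)))) d.

Definition seen_code (A : eqType) (S W : seq (seq A)) (y : nat) : nat :=
  let w := nth [::] W y in if w \in S then index w S else size S + index w W.

Fixpoint window_code (A : eqType) (S : seq (seq A)) (n : nat) (v : seq A) (m Lp : nat)
    : seq (nat * nat) :=
  if m is m'.+1 then
    let lo := Lp - n in
    let y := lo + find (seen_at [::] S (subwords n v)) (iota lo (Lp - lo)) in
    (y - lo, seen_code S (subwords n v) y) :: window_code S n v m' lo
  else [::].

Fixpoint fixed_len (n m Lp : nat) (tau : seq (nat * nat)) : nat :=
  if m is m'.+1 then
    let lo := Lp - n in
    let y := lo + minn (head (0, 0) tau).1 (Lp - lo) in
    (Lp - y) + fixed_len n m' lo (behead tau)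
  else 0.

Definition code_pairs (n Cm : nat) : seq (nat * nat) := [seq (o, c) | o <- iota 0 n.+1, c <- iota 0 Cm].

Fixpoint codes (n Cm m : nat) : seq (seq (nat * nat)) :=
  if m is m'.+1 then [seq oc :: t | oc <- code_pairs n Cm, t <- codes n Cm m'] else [:: [::]].

Lemma size_codes n Cm m : size (codes n Cm m) = ((n.+1 * Cm) ^ m)%N.
Proof. by elim: m => [|m IH] //=; rewrite size_allpairs IH /code_pairs size_allpairs !size_iota expnS. Qed.

Lemma window_code_in_codes (A : eqType) (S : seq (seq A)) n (v : seq A) m Lp Cm :
  (size S + size v).+1 < Cm -> window_code S n v m Lp \in codes n Cm m.
Proof.
move=> HCm; elim: m Lp => [|m IH] Lp //=; apply: allpairs_f => //; apply: allpairs_f.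
  rewrite mem_iota /=.
  have := find_size (seen_at [::] S (subwords n v)) (iota (Lp - n) (Lp - (Lp - n))).
  by rewrite size_iota; lia.
rewrite mem_iota /= /seen_code; set w := nth [::] _ _; case: ifP => H.
  have : index w S < size S by rewrite index_mem H.
  lia.
by have := index_size w (subwords n v); rewrite subwords_size; lia.
Qed.

Lemma count_seen_le_fixed_len (A : eqType) (S : seq (seq A)) n v m Lp : Lp <= m * n ->
  count (seen_at [::] S (subwords n v)) (iota 0 Lp) <= fixed_len n m Lp (window_code S n v m Lp).
Proof.
elim: m Lp => [|m IH] Lp /=; first by rewrite mul0n leqn0 => /eqP ->.
move=> HL; set lo := Lp - n.
have Hlo : lo <= m * n by rewrite /lo; rewrite mulSn in HL; lia.
rewrite -{1}(subnKC (leq_subr n Lp : lo <= Lp)) iotaD count_cat add0n.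
have := IH lo Hlo; have := count_find (seen_at [::] S (subwords n v)) (iota lo (Lp - lo)).
have := find_size (seen_at [::] S (subwords n v)) (iota lo (Lp - lo)).
rewrite size_iota; set f := find _ _ => Hf.
by rewrite (_ : minn (lo + f - lo) (Lp - lo) = f); lia.
Qed.

Lemma decode_block_seen_at (A : eqType) (a0 : A) (S : seq (seq A)) n (v : seq A) y Lp :
  y <= Lp -> Lp <= size v - n -> Lp - y <= n -> y = Lp \/ seen_at [::] S (subwords n v) y ->
  drop y (take Lp v) = decode_block a0 S (seen_code S (subwords n v) y) (Lp - y) (take y v).
Proof.
move=> Hy HL Hd [->|Hr].
  rewrite subnn drop_oversize ?size_take_min; last lia.
  by rewrite /decode_block; case: ifP => _; rewrite ?take0.
set W := subwords n v; set w := nth [::] W y.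
have Hw : w = take n (drop y v) by rewrite /w subwords_nth //; lia.
have Edrop : drop y (take Lp v) = take (Lp - y) (drop y v) by rewrite take_drop subnK.
rewrite /seen_code -/w /decode_block Edrop; case: (boolP (w \in S)) => HwS.
  by rewrite index_mem HwS nth_index // Hw take_takel.
have HwW : w \in take y W by move: Hr; rewrite /seen_at -/W -/w (negbTE HwS).
set p := index w W.
have Hpy : p < y.
  rewrite /p -(cat_take_drop y W) index_cat HwW.
  by have := index_mem w (take y W); rewrite HwW size_take_min; lia.
have Hp : nth [::] W p = w by rewrite nth_index // (mem_take HwW).
have same_window t : t < n -> nth a0 v (p + t) = nth a0 v (y + t).
  have : take n (drop p v) = take n (drop y v) by rewrite -Hw -Hp subwords_nth //; lia.
  by move/(congr1 (nth a0 ^~ t)) => + Ht; rewrite !nth_take // !nth_drop.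
rewrite ifF; last by apply/negbTE; rewrite -leqNgt leq_addr.
rewrite addKn size_takel; last lia.
apply: (@eq_from_nth _ a0) => [|t].
  by rewrite size_takel ?size_mkseq // size_drop; lia.
rewrite size_takel; last by rewrite size_drop; lia.
move=> Ht; rewrite nth_take // nth_drop nth_mkseq // nth_take.
  by apply: (nth_periodic Hpy same_window); lia.
have : t %% (y - p) < y - p by rewrite ltn_mod; lia.
lia.
Qed.

Local Open Scope R_scope.

Lemma sumR_cons (T : Type) x (s : seq T) (g : T -> R) : sumR (x :: s) g = g x + sumR s g.
Proof. by []. Qed.

Lemma sumR_cat (T : Type) (s t : seq T) (g : T -> R) : sumR (s ++ t) g = sumR s g + sumR t g.
Proof. by elim: s => [|x s IH]; rewrite /= ?sumR_cons ?IH /=; lra. Qed.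

Lemma sumR_map (T U : Type) (f : T -> U) (s : seq T) (g : U -> R) :
  sumR (map f s) g = sumR s (fun x => g (f x)).
Proof. by elim: s => [|x s IH] //=; rewrite IH. Qed.

Lemma sumR_flatten (T : Type) (ss : seq (seq T)) (g : T -> R) :
  sumR (flatten ss) g = sumR ss (fun s => sumR s g).
Proof. by elim: ss => [|s ss IH] //; rewrite sumR_cat IH. Qed.

Lemma sumR_allpairs (T U V : Type) (f : T -> U -> V) (s : seq T) (t : seq U) g :
  sumR [seq f x y | x <- s, y <- t] g = sumR s (fun x => sumR t (fun y => g (f x y))).
Proof. by rewrite sumR_flatten sumR_map; elim: s => [|x s IH] //; rewrite !sumR_cons IH sumR_map. Qed.

Lemma eq_sumR (T : Type) (s : seq T) (g g' : T -> R) : g =1 g' -> sumR s g = sumR s g'.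
Proof. by move=> H; elim: s => [|x s IH] //; rewrite !sumR_cons IH H. Qed.

Lemma eq_in_sumR (T : eqType) (s : seq T) (g g' : T -> R) :
  {in s, g =1 g'} -> sumR s g = sumR s g'.
Proof.
elim: s => [|x s IH] H //; rewrite !sumR_cons (H x (mem_head _ _)) IH //.
by move=> y Hy; apply: H; rewrite inE Hy orbT.
Qed.

Lemma ler_sumR_in (T : eqType) (s : seq T) (g g' : T -> R) :
  (forall x, x \in s -> g x <= g' x) -> sumR s g <= sumR s g'.
Proof.
elim: s => [|x s IH] H /=; first lra.
have := H x (mem_head _ _).
suff : sumR s g <= sumR s g' by lra.
by apply: IH => y Hy; apply: H; rewrite inE Hy orbT.
Qed.

Lemma ler_sumR (T : Type) (s : seq T) (g g' : T -> R) :
  (forall x, g x <= g' x) -> sumR s g <= sumR s g'.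
Proof. by move=> H; elim: s => [|x s IH] /=; [lra|have := H x; lra]. Qed.

Lemma sumR_ge0 (T : Type) (s : seq T) (g : T -> R) : (forall x, 0 <= g x) -> 0 <= sumR s g.
Proof. by move=> H; elim: s => [|x s IH] /=; [lra|have := H x; lra]. Qed.

Lemma sumR_mull (T : Type) (s : seq T) (g : T -> R) c : c * sumR s g = sumR s (fun x => c * g x).
Proof. by elim: s => [|x s IH] /=; [lra|rewrite -IH; lra]. Qed.

Lemma sumR_add (T : Type) (s : seq T) (g g' : T -> R) :
  sumR s (fun x => g x + g' x) = sumR s g + sumR s g'.
Proof. by elim: s => [|x s IH] /=; [lra|rewrite IH; lra]. Qed.

Lemma exchange_sumR (T U : Type) (s : seq T) (t : seq U) (g : T -> U -> R) :
  sumR s (fun x => sumR t (g x)) = sumR t (fun y => sumR s (fun x => g x y)).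
Proof.
elim: s => [|x s IH].
  by elim: t => [|y t IHt] //; rewrite sumR_cons -IHt /=; lra.
by rewrite sumR_cons IH -sumR_add; apply: eq_sumR => y.
Qed.

Lemma sumR_const (T : Type) (s : seq T) c : sumR s (fun _ => c) = INR (size s) * c.
Proof.
elim: s => [|x s IH]; first by rewrite /=; lra.
by rewrite sumR_cons IH; change (size (x :: s)) with (size s).+1; rewrite S_INR; lra.
Qed.

Lemma ler_sumR_const (T : Type) (s : seq T) (g : T -> R) c :
  (forall x, g x <= c) -> sumR s g <= INR (size s) * c.
Proof. by move=> H; rewrite -sumR_const; apply: ler_sumR. Qed.

Lemma ler_term_sumR (T : eqType) (s : seq T) (g : T -> R) x :
  (forall y, 0 <= g y) -> x \in s -> g x <= sumR s g.
Proof.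
move=> H; elim: s => [|y s IH] //; rewrite inE sumR_cons => /orP [/eqP ->|Hx].
  by have := sumR_ge0 s H; lra.
by have := IH Hx; have := H y; lra.
Qed.

Lemma ind_true (P : Prop) : P -> ind P = 1.
Proof. by move=> p; rewrite /ind; case: excluded_middle_informative. Qed.

Lemma ind_false (P : Prop) : ~ P -> ind P = 0.
Proof. by move=> p; rewrite /ind; case: excluded_middle_informative. Qed.

Lemma ind_ge0 (P : Prop) : 0 <= ind P.
Proof. by rewrite /ind; destruct (excluded_middle_informative P); simpl; lra. Qed.

Lemma ind_le1 (P : Prop) : ind P <= 1.
Proof. by rewrite /ind; destruct (excluded_middle_informative P); simpl; lra. Qed.

Lemma ind_and (P Q : Prop) : ind (P /\ Q) = ind P * ind Q.
Proof.
rewrite /ind; destruct (excluded_middle_informative P), (excluded_middle_informative Q),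
  (excluded_middle_informative (P /\ Q)); simpl; lra || tauto.
Qed.

Lemma sumR_ind_eq_notin (T : eqType) (s : seq T) (y : T) (phi : T -> R) :
  y \notin s -> sumR s (fun x => ind (x = y) * phi x) = 0.
Proof.
move=> Hy; rewrite (eq_in_sumR (g' := fun _ => 0)) ?sumR_const; first lra.
by move=> x Hx; rewrite ind_false ?Rmult_0_l // => E; rewrite -E Hx in Hy.
Qed.

Lemma sumR_ind_eq_le (T : eqType) (s : seq T) (y : T) (phi : T -> R) beta :
  uniq s -> (forall x, x \in s -> 0 <= phi x <= beta) -> 0 <= beta ->
  sumR s (fun x => ind (x = y) * phi x) <= beta.
Proof.
elim: s => [|x s IH] Hu Hphi Hb /=; first lra.
move: Hu; rewrite cons_uniq => /andP [Hx Hu].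
case: (eqVneq x y) => [<-|Nxy].
  rewrite sumR_ind_eq_notin // ind_true //.
  by have := Hphi x (mem_head _ _); lra.
rewrite ind_false; last by move=> E; rewrite E eqxx in Nxy.
suff : sumR s (fun x => ind (x = y) * phi x) <= beta by lra.
by apply: IH => // z Hz; apply: Hphi; rewrite inE Hz orbT.
Qed.

Lemma pow_le1 x n : 0 <= x <= 1 -> x ^ n <= 1.
Proof. by move=> Hx; elim: n => [|n IH] /=; [lra|have := pow_le x n (proj1 Hx); nra]. Qed.

Lemma Rle_pow_le1 x m n : 0 <= x <= 1 -> (m <= n)%N -> x ^ n <= x ^ m.
Proof.
move=> Hx Hmn; rewrite -(subnKC Hmn) pow_add.
by have := pow_le1 (n - m) Hx; have := pow_le x m (proj1 Hx); nra.
Qed.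

Lemma INR_expn (a m : nat) : INR (a ^ m) = INR a ^ m.
Proof. by elim: m => [|m IH] //=; rewrite expnS -multE mult_INR IH. Qed.

Lemma words_S (A : finType) m : words A m.+1 = [seq a :: w | a <- enum A, w <- words A m].
Proof. by []. Qed.

Lemma size_words (A : finType) m w : w \in words A m -> size w = m.
Proof.
elim: m w => [|m IH] w /=; first by rewrite inE => /eqP ->.
by move/flatten_mapP => [a _] /mapP [w' /IH Hw ->] /=; rewrite Hw.
Qed.

Lemma words_uniq (A : finType) m : uniq (words A m).
Proof.
elim: m => [|m IH] //; rewrite words_S.
by apply: allpairs_uniq => //; [exact: enum_uniq|move=> [a w] [b w'] _ _ /= [-> ->]].
Qed.

Lemma sumR_words_add (A : finType) a b (g : seq A -> R) :
  sumR (words A (a + b)) g = sumR (words A a) (fun x => sumR (words A b) (fun y => g (x ++ y))).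
Proof.
elim: a g => [|a IH] g; first by rewrite add0n /= Rplus_0_r.
by rewrite addSn words_S !sumR_allpairs; apply: eq_sumR => c; rewrite IH.
Qed.

Section Measure.

Variables (A : finType) (F : seq (seq A)) (mu : seq A -> R).
Hypothesis Hmu : invMeasureOn F mu.

Lemma mu_ge0 w : 0 <= mu w.
Proof. by case: Hmu. Qed.

Lemma mu_le1 w : mu w <= 1.
Proof.
case: Hmu => _ [H1 [Hr _]]; elim/last_ind: w => [|w a IH]; first lra.
suff : mu (rcons w a) <= mu w by lra.
rewrite [X in _ <= X]Hr; apply: (ler_term_sumR (g := fun b => mu (rcons w b))).
  by move=> b; apply: mu_ge0.
by rewrite mem_enum.
Qed.

Lemma sumR_words_mu m : sumR (words A m) mu = 1.
Proof.
case: Hmu => _ [H1 [_ [Hl _]]]; elim: m => [|m IH]; first by rewrite /= H1; lra.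
by rewrite words_S sumR_allpairs exchange_sumR -IH; apply: eq_sumR => w; rewrite -Hl.
Qed.

Lemma mu_cat_le K : 0 <= K -> quasiBernoulli F mu K ->
  forall u v, mu (u ++ v) <= K * mu u * mu v.
Proof.
move=> HK Hq u v; case: (classic (inB F (u ++ v))) => Hb; first by case: (Hq u v Hb).
case: Hmu => _ [_ [_ [_ ->]]] //.
by apply: Rmult_le_pos; [apply: Rmult_le_pos|]; rewrite //; apply: mu_ge0.
Qed.

Lemma mu_le_gamma_pow gamma n0 : 0 < gamma < 1 ->
  (forall u : seq A, inB F u -> (n0 <= size u)%N -> mu u <= gamma ^ size u) ->
  forall x, mu x <= gamma ^ size x / gamma ^ n0.
Proof.
move=> Hg Hn0 x.
have inv_pow_ge1 d : 1 <= / gamma ^ d.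
  by rewrite -Rinv_1; apply: Rinv_le_contravar; [apply: pow_lt|apply: pow_le1]; lra.
have Hx : 0 <= gamma ^ size x by apply: pow_le; lra.
case: (leqP n0 (size x)) => Hs.
  have := Rmult_le_compat_l _ _ _ Hx (inv_pow_ge1 n0); rewrite Rmult_1_r /Rdiv.
  set y := _ * / _ => Hle.
  case: (classic (inB F x)) => Hb; first by have := Hn0 x Hb Hs; lra.
  by case: Hmu => _ [_ [_ [_ ->]]] //; lra.
have -> : gamma ^ size x / gamma ^ n0 = / gamma ^ (n0 - size x).
  rewrite -{1}(subnK (ltnW Hs)) pow_add; field.
  by split; apply/Rgt_not_eq/pow_lt; lra.
by apply: Rle_trans (mu_le1 x) (inv_pow_ge1 _).
Qed.

Lemma mu_le_exp_entropy h delta n x : (1 <= n)%N ->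
  E_set F mu h delta n x -> mu x <= exp (- INR n * (h - delta)).
Proof.
move=> Hn [_ [_ Hab]]; have Hn' : 0 < INR n by apply/lt_0_INR/ltP.
case: (Rle_lt_or_eq_dec 0 (mu x) (mu_ge0 x)) => Hpos; last first.
  by rewrite -Hpos; apply/Rlt_le/exp_pos.
rewrite -(exp_ln (mu x)) //; apply/Rlt_le/exp_increasing.
have [Hlo Hhi] := Rabs_def2 _ _ Hab.
have : - INR n * (- / INR n * ln (mu x)) = ln (mu x) by field; lra.
nra.
Qed.

End Measure.

(* A chain lists blocks from the right end of a word to the left: the head block
   covers the last [blen] letters, and its condition sees the prefix before it.
   [bbound] bounds the measure of the admissible block given any prefix. *)
Record block (A : Type) := Block { blen : nat; bcond : seq A -> seq A -> Prop; bbound : R }.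

Fixpoint chain_len (A : Type) (s : seq (block A)) : nat :=
  if s is b :: s' then (chain_len s' + blen b)%N else 0%N.

Fixpoint chain_holds (A : Type) (s : seq (block A)) (v : seq A) : Prop :=
  if s is b :: s' then
    chain_holds s' (take (chain_len s') v) /\ bcond b (take (chain_len s') v) (drop (chain_len s') v)
  else True.

Fixpoint chain_mu (A : Type) (mu : seq A -> R) (s : seq (block A)) (v : seq A) : R :=
  if s is b :: s' then chain_mu mu s' (take (chain_len s') v) * mu (drop (chain_len s') v) else 1.

Fixpoint chain_bound (A : Type) (s : seq (block A)) : R :=
  if s is b :: s' then chain_bound s' * bbound b else 1.

Definition block_admissible (A : finType) (mu : seq A -> R) (b : block A) : Prop :=
  0 <= bbound b /\
  forall pre, sumR (words A (blen b)) (fun x => ind (bcond b pre x) * mu x) <= bbound b.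

Section Chains.

Variables (A : finType) (F : seq (seq A)) (mu : seq A -> R).
Hypothesis Hmu : invMeasureOn F mu.

Lemma chain_mu_ge0 s v : 0 <= chain_mu mu s v.
Proof. by elim: s v => [|b s IH] v /=; [lra|apply: Rmult_le_pos; last apply: mu_ge0 Hmu _]. Qed.

Lemma sumR_chain_le s : (forall b, List.In b s -> block_admissible mu b) ->
  sumR (words A (chain_len s)) (fun v => ind (chain_holds s v) * chain_mu mu s v) <= chain_bound s.
Proof.
elim: s => [|b s IH] Hs; first by rewrite /= ind_true //; lra.
have [Hb0 Hb] := Hs b (or_introl erefl).
have {}IH := IH (fun c Hc => Hs c (or_intror Hc)).
rewrite /= sumR_words_add.
apply: Rle_trans (_ : sumR (words A (chain_len s))
  (fun pre => bbound b * (ind (chain_holds s pre) * chain_mu mu s pre)) <= _); last first.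
  by rewrite -sumR_mull Rmult_comm; apply: Rmult_le_compat_r.
apply: ler_sumR_in => pre /size_words Hpre.
have split_pre x : take (chain_len s) (pre ++ x) = pre /\ drop (chain_len s) (pre ++ x) = x.
  by rewrite -Hpre take_size_cat // drop_size_cat.
rewrite (@eq_sumR _ _ _ (fun x => ind (chain_holds s pre) * chain_mu mu s pre * (ind (bcond b pre x) * mu x))).
  rewrite -sumR_mull Rmult_comm; apply: Rmult_le_compat_r => //.
  by apply: Rmult_le_pos; [apply: ind_ge0|apply: chain_mu_ge0].
by move=> x /=; case: (split_pre x) => -> ->; rewrite ind_and; ring.
Qed.

Lemma mu_le_chain_mu K s v : 0 <= K -> quasiBernoulli F mu K ->
  mu v <= K ^ size s * chain_mu mu s v.
Proof.
move=> HK0 Hq; elim: s v => [|b s IH] v /=; first by have := mu_le1 Hmu v; lra.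
rewrite -{1}(cat_take_drop (chain_len s) v).
apply: Rle_trans (mu_cat_le Hmu HK0 Hq _ _) _.
have := Rmult_le_compat_r _ _ _ (mu_ge0 Hmu (drop (chain_len s) v)) (IH (take (chain_len s) v)).
set a := mu (take _ _); set c := mu (drop _ _); set p := chain_mu _ _ _ => Hle.
have := Rmult_le_compat_l _ _ _ HK0 Hle; rewrite /=; lra.
Qed.

End Chains.

Section Windows.

Variables (A : finType) (a0 : A) (F : seq (seq A)) (mu : seq A -> R).
Variables (S : seq (seq A)) (gamma : R) (n0 n : nat).

Definition fixed_block (c d : nat) : block A :=
  Block d (fun pre x => x = decode_block a0 S c d pre) (gamma ^ d / gamma ^ n0).

Definition free_block (d : nat) : block A := Block d (fun _ _ => True) 1.

Fixpoint window_chain (m Lp : nat) (tau : seq (nat * nat)) : seq (block A) :=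
  if m is m'.+1 then
    let lo := (Lp - n)%N in
    let y := (lo + minn (head (0, 0)%N tau).1 (Lp - lo))%N in
    fixed_block (head (0, 0)%N tau).2 (Lp - y) :: free_block (y - lo)
      :: window_chain m' lo (behead tau)
  else [::].

Lemma chain_len_window_chain m Lp tau : (Lp <= m * n)%N -> chain_len (window_chain m Lp tau) = Lp.
Proof.
elim: m Lp tau => [|m IH] Lp tau /=; first by rewrite mul0n leqn0 => /eqP.
by move=> HL; rewrite IH; [lia|rewrite mulSn in HL; lia].
Qed.

Lemma size_window_chain m Lp tau : size (window_chain m Lp tau) = (2 * m)%N.
Proof. by elim: m Lp tau => [|m IH] Lp tau //=; rewrite IH; lia. Qed.

Lemma chain_bound_window_chain m Lp tau : 0 < gamma ->
  chain_bound (window_chain m Lp tau) = gamma ^ fixed_len n m Lp tau / gamma ^ (n0 * m).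
Proof.
move=> Hg; have Hp d : gamma ^ d <> 0 by apply/Rgt_not_eq/pow_lt.
elim: m Lp tau => [|m IH] Lp tau /=; first by rewrite muln0 /=; field.
by rewrite IH pow_add mulnS pow_add; field; split.
Qed.

Lemma window_chain_holds (v : seq A) m Lp : (Lp <= m * n)%N -> (Lp <= size v - n)%N ->
  chain_holds (window_chain m Lp (window_code S n v m Lp)) (take Lp v).
Proof.
elim: m Lp => [|m IH] Lp HL HLv //=.
set lo := (Lp - n)%N; set f := find (seen_at [::] S (subwords n v)) (iota lo (Lp - lo)).
have Hf : (f <= Lp - lo)%N.
  by have := find_size (seen_at [::] S (subwords n v)) (iota lo (Lp - lo)); rewrite size_iota.
have Hlo : (lo <= m * n)%N by rewrite /lo; rewrite mulSn in HL; lia.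
rewrite (_ : (lo + minn (lo + f - lo) (Lp - lo) = lo + f)%N); last lia.
rewrite chain_len_window_chain // (_ : (lo + (lo + f - lo) = lo + f)%N); last lia.
rewrite !take_takel; try lia.
split; first by split => //; apply: IH; lia.
apply: decode_block_seen_at => //; try lia.
case: (ltnP f (Lp - lo)) => Hfl; [right|left; lia].
have Hh : has (seen_at [::] S (subwords n v)) (iota lo (Lp - lo)) by rewrite has_find size_iota.
by have := nth_find 0%N Hh; rewrite -/f nth_iota.
Qed.

Hypothesis Hmu : invMeasureOn F mu.
Hypothesis Hg : 0 < gamma < 1.
Hypothesis Hn0 : forall u : seq A, inB F u -> (n0 <= size u)%N -> mu u <= gamma ^ size u.

Lemma window_chain_admissible m Lp tau b :
  List.In b (window_chain m Lp tau) -> block_admissible mu b.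
Proof.
have Hpos d : 0 <= gamma ^ d / gamma ^ n0.
  by apply: Rmult_le_pos; [apply: pow_le|apply/Rlt_le/Rinv_0_lt_compat/pow_lt]; lra.
elim: m Lp tau => [|m IH] Lp tau //= [<-|[<-|]]; last exact: IH.
  split=> [|pre]; first exact: Hpos.
  apply: sumR_ind_eq_le; [exact: words_uniq| |exact: Hpos].
  move=> x /size_words Hx; split; first exact: mu_ge0 Hmu x.
  by have := mu_le_gamma_pow Hmu Hg Hn0 x; rewrite Hx.
split=> [|pre] /=; first lra.
by rewrite (@eq_sumR _ _ _ mu) ?(sumR_words_mu Hmu); [lra|move=> x; rewrite ind_true // Rmult_1_l].
Qed.

End Windows.

Definition new_subwords (A : eqType) (n : nat) (S : seq (seq A)) (v : seq A) : seq (seq A) :=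
  undup [seq x <- subwords n v | x \notin S].

Definition entropy_block (A : finType) (F : seq (seq A)) mu h delta n : block A :=
  Block n (fun pre x => x = take n pre /\ E_set F mu h delta n x) (exp (- INR n * (h - delta))).

Lemma entropy_block_admissible (A : finType) (F : seq (seq A)) mu h delta n :
  invMeasureOn F mu -> (1 <= n)%N -> block_admissible mu (entropy_block F mu h delta n).
Proof.
move=> Hmu Hn; have He : 0 <= exp (- INR n * (h - delta)) by apply/Rlt_le/exp_pos.
split=> // pre /=.
rewrite (@eq_sumR _ _ _ (fun x => ind (x = take n pre) * (ind (E_set F mu h delta n x) * mu x))); last first.
  by move=> x; rewrite ind_and; ring.
apply: sumR_ind_eq_le => //; first exact: words_uniq.
move=> x _; case: (classic (E_set F mu h delta n x)) => HE.
  by rewrite ind_true // Rmult_1_l; split; [exact: (mu_ge0 Hmu x)|exact: (mu_le_exp_entropy Hmu Hn HE)].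
by rewrite ind_false // Rmult_0_l; lra.
Qed.

(* The number of codes, times the quasi-Bernoulli losses of the coding chain and
   the slack of the bound on short words. *)
Definition coding_const (K gamma : R) (n0 n k m : nat) : R :=
  INR ((n.+1 * (k + k).+3) ^ m) * K ^ (2 * m + 1) / (gamma * gamma ^ (n0 * m)).

Section GoodWords.

Variables (A : finType) (a0 : A) (F : seq (seq A)) (mu : seq A -> R).
Variables (K gamma h delta : R) (n0 n k m : nat).
Hypothesis Hmu : invMeasureOn F mu.
Hypothesis HK : 1 < K.
Hypothesis Hqb : quasiBernoulli F mu K.
Hypothesis Hg : 0 < gamma < 1.
Hypothesis Hn0 : forall u : seq A, inB F u -> (n0 <= size u)%N -> mu u <= gamma ^ size u.
Hypothesis Hn : (1 <= n)%N.
Hypothesis Hk : (2 * n <= k)%N.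
Hypothesis Hm : (k - n <= m * n)%N.

Definition G_chain (S : seq (seq A)) (tau : seq (nat * nat)) : seq (block A) :=
  entropy_block F mu h delta n :: window_chain a0 S gamma n0 n m (k - n) tau.

Lemma chain_len_G_chain S tau : chain_len (G_chain S tau) = k.
Proof. by rewrite /= chain_len_window_chain //; lia. Qed.

Lemma G_chain_holds S (v : seq A) : size v = k -> G_set F mu h delta n k v ->
  chain_holds (G_chain S (window_code S n v m (k - n))) v.
Proof.
move=> Hsv [_ [_ [Htk HE]]] /=; rewrite chain_len_window_chain //; split.
  by apply: window_chain_holds => //; rewrite Hsv; lia.
by rewrite take_takel -?Htk //; lia.
Qed.

Lemma fixed_len_window_code (S : seq (seq A)) (v : seq A) : size v = k ->
  (k - n + 1 - size (new_subwords n S v) <= 1 + fixed_len n m (k - n) (window_code S n v m (k - n)))%N.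
Proof.
move=> Hsv; have := undup_unseen_add_count_seen [::] S (subwords n v).
have := count_seen_le_fixed_len S v Hm.
rewrite /new_subwords subwords_size Hsv -addn1 iotaD count_cat /= add0n.
by case: (seen_at [::] S (subwords n v) _) => /=; lia.
Qed.

Lemma sumR_G_chain_le S tau :
  sumR (words A k) (fun v => ind (chain_holds (G_chain S tau) v) * mu v)
  <= K ^ (2 * m + 1) * (gamma ^ fixed_len n m (k - n) tau / gamma ^ (n0 * m) * exp (- INR n * (h - delta))).
Proof.
set s := G_chain S tau.
have Hsz : size s = (2 * m + 1)%N by rewrite /= size_window_chain; lia.
have Hb : chain_bound s
  = gamma ^ fixed_len n m (k - n) tau / gamma ^ (n0 * m) * exp (- INR n * (h - delta)).
  by rewrite /= chain_bound_window_chain //; lra.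
have Hchain := sumR_chain_le Hmu (s := s).
rewrite chain_len_G_chain Hb in Hchain.
rewrite -Hsz; apply: Rle_trans (_ : sumR _ (fun v => K ^ size s * (ind (chain_holds s v) * chain_mu mu s v)) <= _).
  apply: ler_sumR => v; have := mu_le_chain_mu Hmu s v (Rlt_le _ _ (Rlt_trans _ _ _ Rlt_0_1 HK)) Hqb.
  have := ind_ge0 (chain_holds s v); have := ind_le1 (chain_holds s v).
  have := chain_mu_ge0 Hmu s v; have := mu_ge0 Hmu v; nra.
rewrite -sumR_mull; apply: Rmult_le_compat_l; first by apply: pow_le; lra.
apply: Hchain => b [<-|Hb']; first exact: entropy_block_admissible.
exact: (window_chain_admissible Hmu Hg Hn0 Hb').
Qed.

Lemma sumR_G_new_subwords_le (S : seq (seq A)) a : (size S <= k.+1)%N ->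
  sumR (words A k) (fun v => ind (G_set F mu h delta n k v /\ size (new_subwords n S v) = a) * mu v)
  <= coding_const K gamma n0 n k m * gamma ^ (k - n + 1 - a) * exp (- INR n * (h - delta)).
Proof.
move=> HS; set T := codes n (k + k).+3 m.
have -> : coding_const K gamma n0 n k m * gamma ^ (k - n + 1 - a) * exp (- INR n * (h - delta))
  = INR ((n.+1 * (k + k).+3) ^ m) * (K ^ (2 * m + 1)
    * (gamma ^ (k - n + 1 - a) / (gamma * gamma ^ (n0 * m))) * exp (- INR n * (h - delta))).
  by rewrite /coding_const; field; split; [apply/Rgt_not_eq/pow_lt|]; lra.
pose coded tau := (k - n + 1 - a <= 1 + fixed_len n m (k - n) tau)%N.
pose term tau v := ind (chain_holds (G_chain S tau) v) * (ind (coded tau) * mu v).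
have Hterm tau v : 0 <= term tau v.
  by apply: Rmult_le_pos; [|apply: Rmult_le_pos; [|exact: (mu_ge0 Hmu v)]]; apply: ind_ge0.
apply: Rle_trans (_ : sumR (words A k) (fun v => sumR T (fun tau => term tau v)) <= _).
  apply: ler_sumR_in => v /size_words Hsv.
  case: (classic (G_set F mu h delta n k v /\ size (new_subwords n S v) = a)) => [[HG Ha]|HG]; last first.
    by rewrite ind_false // Rmult_0_l; apply: sumR_ge0.
  set tau0 := window_code S n v m (k - n).
  apply: Rle_trans (ler_term_sumR (Hterm^~ v) (_ : tau0 \in T)); last first.
    by apply: window_code_in_codes; rewrite Hsv !ltnS -addSn leq_add2r.
  rewrite /term (ind_true (G_chain_holds S Hsv HG)) (ind_true (P := coded tau0)).
    by rewrite ind_true //; lra.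
  by rewrite /coded -Ha; apply: fixed_len_window_code.
rewrite exchange_sumR -(size_codes n (k + k).+3 m); apply: ler_sumR_const => tau.
rewrite (@eq_sumR _ _ _ (fun v => ind (coded tau) * (ind (chain_holds (G_chain S tau) v) * mu v))); last first.
  by move=> v; rewrite /term; ring.
rewrite -sumR_mull; case: (classic (coded tau)) => Hc; last first.
  rewrite ind_false // Rmult_0_l; apply: Rmult_le_pos; last by apply/Rlt_le/exp_pos.
  apply: Rmult_le_pos; first by apply: pow_le; lra.
  by apply: Rmult_le_pos; [apply: pow_le|apply/Rlt_le/Rinv_0_lt_compat/Rmult_lt_0_compat; [|apply: pow_lt]]; lra.
rewrite ind_true // Rmult_1_l; apply: Rle_trans (sumR_G_chain_le S tau) _.
have Hg0 : 0 < gamma ^ (n0 * m) by apply: pow_lt; lra.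
have Hfix : gamma ^ fixed_len n m (k - n) tau <= gamma ^ (k - n + 1 - a) / gamma.
  apply/(Rmult_le_reg_r gamma); first lra.
  have -> : gamma ^ (k - n + 1 - a) / gamma * gamma = gamma ^ (k - n + 1 - a) by field; lra.
  by rewrite Rmult_comm tech_pow_Rmult; apply: Rle_pow_le1; [lra|rewrite /coded in Hc; lia].
have -> : gamma ^ (k - n + 1 - a) / (gamma * gamma ^ (n0 * m))
        = gamma ^ (k - n + 1 - a) / gamma / gamma ^ (n0 * m) by field; lra.
rewrite -Rmult_assoc; apply: Rmult_le_compat_r; first by apply/Rlt_le/exp_pos.
apply: Rmult_le_compat_l; first by apply: pow_le; lra.
by apply: Rmult_le_compat_r; first apply/Rlt_le/Rinv_0_lt_compat.
Qed.

End GoodWords.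

Lemma new_subwords_nil (A : eqType) n (v : seq A) : new_subwords n [::] v = undup (subwords n v).
Proof. by rewrite /new_subwords (eq_filter (a2 := predT)) ?filter_predT. Qed.

Lemma muPair_Q_le (A : finType) (F : seq (seq A)) mu h delta n k j :
  invMeasureOn F mu ->
  let G S a v := G_set F mu h delta n k v /\ size (new_subwords n S v) = a in
  muPair mu k (Q_set F mu h delta n k j)
  <= sumR (words A k) (fun u => sumR (iota 0 j.+1) (fun a =>
       ind (G [::] a u) * mu u * sumR (words A k) (fun v => ind (G (subwords n u) (j - a)%N v) * mu v))).
Proof.
move=> Hmu G; have H0 := mu_ge0 Hmu.
have Hterm u v a : 0 <= ind (G [::] a u) * ind (G (subwords n u) (j - a)%N v) * (mu u * mu v).
  by apply: Rmult_le_pos; apply: Rmult_le_pos; (apply: ind_ge0 || apply: H0).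
apply: ler_sumR => u.
rewrite (@eq_sumR _ _ _ (fun a => sumR (words A k)
  (fun v => ind (G [::] a u) * ind (G (subwords n u) (j - a)%N v) * (mu u * mu v)))); last first.
  by move=> a; rewrite sumR_mull; apply: eq_sumR => v; ring.
rewrite -exchange_sumR; apply: ler_sumR => v.
case: (classic (Q_set F mu h delta n k j u v)) => HQ; last first.
  by rewrite ind_false // Rmult_0_l; apply: sumR_ge0.
have [Gu [Gv [_ Hj]]] := HQ; set au := size (new_subwords n [::] u).
have Hsplit : (au + size (new_subwords n (subwords n u) v))%N = j.
  by rewrite /au new_subwords_nil -size_undup_cat.
have Hau : au \in iota 0 j.+1 by rewrite mem_iota; lia.
apply: Rle_trans (ler_term_sumR (fun a => Hterm u v a) Hau).
have Gu' : G [::] au u by [].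
have Gv' : G (subwords n u) (j - au)%N v by split=> //; lia.
by rewrite (ind_true HQ) (ind_true Gu') (ind_true Gv'); lra.
Qed.

Lemma muPair_Q_le_coding_const (A : finType) (a0 : A) (F : seq (seq A)) mu K gamma n0 h delta n k m j :
  invMeasureOn F mu -> 1 < K -> quasiBernoulli F mu K -> 0 < gamma < 1 ->
  (forall u : seq A, inB F u -> (n0 <= size u)%N -> mu u <= gamma ^ size u) ->
  (1 <= n)%N -> (2 * n <= k)%N -> (k - n <= m * n)%N ->
  muPair mu k (Q_set F mu h delta n k j)
  <= INR j.+1 * coding_const K gamma n0 n k m ^ 2
     * exp (- 2 * INR n * (h - delta)) * gamma ^ (2 * (k - n + 1) - j).
Proof.
move=> Hmu HK Hq Hg Hn0 Hn Hk Hm.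
set c := coding_const K gamma n0 n k m; set e := exp (- INR n * (h - delta)).
pose B a := c * gamma ^ (k - n + 1 - a) * e.
have core S a := @sumR_G_new_subwords_le A a0 F mu K gamma h delta n0 n k m Hmu HK Hq Hg Hn0 Hn Hk Hm S a.
have HB a : 0 <= B a.
  apply: Rmult_le_pos; [apply: Rmult_le_pos; [|apply: pow_le]|apply/Rlt_le/exp_pos]; try lra.
  apply: Rmult_le_pos; first by apply: Rmult_le_pos; [apply: pos_INR|apply: pow_le; lra].
  by apply/Rlt_le/Rinv_0_lt_compat/Rmult_lt_0_compat; [|apply: pow_lt]; lra.
apply: Rle_trans (muPair_Q_le h delta n k j Hmu) _.
apply: Rle_trans (_ : sumR (words A k) (fun u => sumR (iota 0 j.+1) (fun a =>
  ind (G_set F mu h delta n k u /\ size (new_subwords n [::] u) = a) * mu u * B (j - a)%N)) <= _).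
  apply: ler_sumR_in => u Hu; apply: ler_sumR => a.
  apply: Rmult_le_compat_l; first by apply: Rmult_le_pos; [apply: ind_ge0|exact: (mu_ge0 Hmu u)].
  by apply: core; rewrite subwords_size (size_words Hu); lia.
rewrite exchange_sumR.
apply: Rle_trans (_ : sumR (iota 0 j.+1) (fun a => B (j - a)%N * B a) <= _).
  apply: ler_sumR => a.
  rewrite (@eq_sumR _ _ _ (fun u => B (j - a)%N * (ind (G_set F mu h delta n k u
    /\ size (new_subwords n [::] u) = a) * mu u))); last by move=> u; ring.
  by rewrite -sumR_mull; apply: Rmult_le_compat_l => //; apply: core.
have -> : exp (- 2 * INR n * (h - delta)) = e * e by rewrite /e -exp_plus; congr exp; ring.
set C := c ^ 2 * (e * e) * gamma ^ (2 * (k - n + 1) - j).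
apply: Rle_trans (@ler_sumR_in _ _ _ (fun _ => C) _) _; last first.
  by rewrite sumR_const size_iota /C; apply: Req_le; ring.
move=> a; rewrite mem_iota add0n => /andP [_ Ha].
have Hpow : gamma ^ (k - n + 1 - (j - a)) * gamma ^ (k - n + 1 - a) <= gamma ^ (2 * (k - n + 1) - j).
  by rewrite -pow_add; apply: Rle_pow_le1; [lra|lia].
have -> : B (j - a)%N * B a = c ^ 2 * (e * e) * (gamma ^ (k - n + 1 - (j - a)) * gamma ^ (k - n + 1 - a)).
  by rewrite /B; ring.
apply: Rmult_le_compat_l Hpow.
by apply: Rmult_le_pos; [apply: pow2_ge_0|apply: Rmult_le_pos; apply/Rlt_le/exp_pos].
Qed.

Lemma pow_le_Rpower (Y r : R) (d : nat) : 1 <= Y -> INR d <= r -> Y ^ d <= Rpower Y r.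
Proof.
move=> HY Hd; rewrite -Rpower_pow; last lra.
by apply: Rle_Rpower.
Qed.

Section Numerics.

Variables (K gamma : R) (n0 n k j : nat).
Hypothesis HK : 1 < K.
Hypothesis Hg : 0 < gamma < 1.
Hypothesis Hn : (1 <= n)%N.
Hypothesis Hk : (2 * n < k)%N.
Hypothesis Hkn : (k <= n * n)%N.
Hypothesis Hj : (j <= 2 * (k - n + 1))%N.

(* [Y] dominates every factor of [coding_const]; the exponent [3 m + 2] is
   then at most [11 k / n] because [k / n >= 2]. *)
Let V := K ^ 4 * (/ gamma) ^ (2 * n0 + 2).
Let Y := 10 * INR n ^ 3 * V.

Lemma V_ge1 : 1 <= V.
Proof.
have Hg1 : 1 <= / gamma by rewrite -Rinv_1; apply: Rinv_le_contravar; lra.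
have := pow_R1_Rle K 4 (Rlt_le _ _ HK); have := pow_R1_Rle _ (2 * n0 + 2) Hg1.
by rewrite /V; nra.
Qed.

Lemma V_le_Y : V <= Y.
Proof.
have Hn3 : 1 <= INR n ^ 3 by apply: pow_R1_Rle; apply: (le_INR 1); apply/leP.
by have := V_ge1; rewrite /Y; nra.
Qed.

Lemma nat_le_Y (p : nat) : (p <= 10 * n * n * n)%N -> INR p <= Y.
Proof.
move=> Hp; have Hn3 : 1 <= INR n ^ 3 by apply: pow_R1_Rle; apply: (le_INR 1); apply/leP.
apply: Rle_trans (_ : 10 * INR n ^ 3 <= _); last by have := V_ge1; rewrite /Y; nra.
have -> : 10 * INR n ^ 3 = INR (10 * n * n * n) by rewrite !mult_INR /=; ring.
by apply/le_INR/leP.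
Qed.

Lemma coding_const_sq_le (m : nat) :
  INR j.+1 * coding_const K gamma n0 n k m ^ 2 <= Y ^ (3 * m + 2).
Proof.
have HV := V_ge1; have HVY := V_le_Y.
have Hg1 : 1 <= / gamma by rewrite -Rinv_1; apply: Rinv_le_contravar; lra.
have Hgp : 0 < gamma ^ (n0 * m) by apply: pow_lt; lra.
have -> : coding_const K gamma n0 n k m
    = INR (n.+1 * (k + k).+3) ^ m * (K ^ (2 * m + 1) * (/ gamma) ^ (n0 * m + 1)).
  rewrite /coding_const INR_expn pow_inv (addn1 (n0 * m)) -tech_pow_Rmult; field; lra.
have Hlosses : (K ^ (2 * m + 1) * (/ gamma) ^ (n0 * m + 1)) ^ 2 <= Y ^ (m + 1).
  apply: Rle_trans (_ : V ^ (m + 1) <= _); last by apply: pow_incr; lra.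
  rewrite /V (Rpow_mult_distr (K ^ (2 * m + 1))) (Rpow_mult_distr (K ^ 4)) -!pow_mult.
  apply: Rmult_le_compat; try (apply: pow_le; lra).
    by apply: Rle_pow; [lra|apply/leP; lia].
  by apply: Rle_pow => //; apply/leP; nia.
have Hcodes : (INR (n.+1 * (k + k).+3) ^ m) ^ 2 <= Y ^ (2 * m).
  rewrite -pow_mult (_ : (m * 2)%coq_nat = 2 * m)%N; last by rewrite multE mulnC.
  by apply: pow_incr; split; [apply: pos_INR|apply: nat_le_Y; nia].
rewrite Rpow_mult_distr (_ : 3 * m + 2 = 1 + (2 * m + (m + 1)))%N; last lia.
rewrite (pow_add Y 1) (pow_add Y (2 * m)) pow_1.
apply: Rmult_le_compat; [apply: pos_INR|apply: Rmult_le_pos; apply: pow2_ge_0|apply: nat_le_Y; nia|].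
by apply: Rmult_le_compat; try apply: pow2_ge_0.
Qed.

Lemma coding_const_sq_le_Rpower :
  INR j.+1 * coding_const K gamma n0 n k (k %/ n).+1 ^ 2
  <= Rpower (INR n ^ 33 * (10 * K ^ 4 * (/ gamma) ^ (2 * n0 + 2)) ^ 11) (INR k / INR n).
Proof.
have HY : 1 <= Y by apply: Rle_trans V_ge1 V_le_Y.
have Hnp : 0 < INR n by apply/lt_0_INR/ltP.
have -> : INR n ^ 33 * (10 * K ^ 4 * (/ gamma) ^ (2 * n0 + 2)) ^ 11 = Rpower Y 11.
  by rewrite (_ : 11 = INR 11); [rewrite Rpower_pow; [rewrite /Y /V !Rpow_mult_distr -pow_mult; ring|lra]|rewrite /=; ring].
rewrite Rpower_mult; apply: Rle_trans (coding_const_sq_le _) (pow_le_Rpower HY _).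
have Hdiv : INR (k %/ n) <= INR k / INR n.
  apply/(Rmult_le_reg_r (INR n)) => //; field_simplify; last lra.
  by rewrite -mult_INR; apply/le_INR/leP; rewrite multE; apply: leq_divM.
have Hk2 : 2 <= INR k / INR n.
  apply/(Rmult_le_reg_r (INR n)) => //; field_simplify; last lra.
  by rewrite (_ : 2 * INR n = INR (2 * n)); [apply/le_INR/leP; lia|rewrite -multE mult_INR].
rewrite plus_INR mult_INR (S_INR (k %/ n)) (_ : INR 3 = 3); last by rewrite /=; ring.
by rewrite (_ : INR 2 = 2); [lra|rewrite /=; ring].
Qed.

End Numerics.

Lemma peval_monomial d c x : peval (nseq d 0 ++ [:: c]) x = x ^ d * c.
Proof. by elim: d => [|d IH]; rewrite /peval /= ?IH; [ring|rewrite /peval in IH; rewrite IH; ring]. Qed.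

Lemma isInf_gamma0Set_ge0 (A : finType) (F : seq (seq A)) mu g0 : isInf (gamma0Set F mu) g0 -> 0 <= g0.
Proof. by case=> _ Hsup; apply: Hsup => g [Hg _]; lra. Qed.

Lemma muPair_Q_short (A : finType) (F : seq (seq A)) mu h delta n k j : (k < n)%N ->
  muPair mu k (Q_set F mu h delta n k j) = 0.
Proof.
move=> Hkn; rewrite /muPair (@eq_sumR _ _ _ (fun _ => 0)) ?sumR_const; first lra.
move=> u; rewrite (@eq_sumR _ _ _ (fun _ => 0)) ?sumR_const; first lra.
move=> v; rewrite ind_false; first lra.
by move=> [[Hu [_ [_ [_ [Hs _]]]]] _]; move: Hs; rewrite size_take_min Hu; lia.
Qed.

Lemma twice_lt_of_ratio (n k : nat) : (0 < k)%N -> Rabs (INR n / INR k) < 1 / 2 -> (2 * n < k)%N.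
Proof.
move=> Hk H; have Hkp : 0 < INR k by apply/lt_0_INR/ltP.
have : INR (2 * n) < INR k.
  rewrite -multE mult_INR; apply/(Rmult_lt_reg_r (/ INR k)); first exact: Rinv_0_lt_compat.
  by rewrite Rinv_r; [have := Rle_abs (INR n / INR k); rewrite /Rdiv /=; lra|lra].
by move/INR_lt/ltP.
Qed.

Lemma le_sq_of_ratio (n k : nat) : (3 <= n)%N ->
  Rabs (INR k * ln (INR n) / INR n ^ 2) < 1 -> (k <= n * n)%N.
Proof.
move=> Hn H; have HnR : 3 <= INR n by have := le_INR 3 n (leP Hn); rewrite /=; lra.
have Hln : 1 <= ln (INR n).
  case: (Rle_or_lt 1 (ln (INR n))) => // /exp_increasing.
  by rewrite exp_ln; [have := exp_le_3; lra|lra].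
have Hsq : 0 < INR n ^ 2 by apply: pow_lt; lra.
have : INR k * ln (INR n) < INR n ^ 2.
  apply/(Rmult_lt_reg_r (/ INR n ^ 2)); first exact: Rinv_0_lt_compat.
  by rewrite Rinv_r; [have := Rle_abs (INR k * ln (INR n) / INR n ^ 2); rewrite /Rdiv; lra|lra].
have := pos_INR k; move=> Hk0 Hlt.
have : INR k < INR (n * n) by rewrite -multE mult_INR /=; nra.
by move/INR_lt/ltP; lia.
Qed.

Unset Implicit Arguments.
Set Strict Implicit.

Theorem mainTheorem10 (A : finType) (F : seq (seq A)) (f : (Z -> A) -> R)
  (P : R) (mu : seq A -> R) (h K alpha gamma gamma0 delta : R)
  (n0 : nat) (k : nat -> nat)
  (HX : nontrivialSFT F) (Hmix : topMixing F) (Hf : holderOn F f)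
  (Hmu : invMeasureOn F mu) (HK1 : 1 < K)
  (Hgibbs : gibbsProp F f P mu K) (Hqb : quasiBernoulli F mu K)
  (Hh : isEntropy mu h)
  (Hg0 : isInf (gamma0Set F mu) gamma0)
  (Halpha : gamma0 < alpha <= 1) (Hgamma : gamma0 < gamma < alpha)
  (Hn0 : forall u : seq A, inB F u -> (n0 <= size u)%N -> mu u <= gamma ^ size u)
  (Hdelta : 0 < delta < / 4 * ln (alpha / gamma))
  (Hk1 : Un_cv (fun n => INR n / INR (k n)) 0)
  (Hk2 : Un_cv (fun n => INR (k n) * ln (INR n) / (INR n ^ 2)) 0) :
  exists p4 : seq R, exists N : nat, forall n : nat, (N <= n)%N ->
    forall j : nat, (1 <= j)%N -> (j <= 2 * (k n - n + 1))%N ->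
      muPair mu (k n) (Q_set F mu h delta n (k n) j)
        <= Rpower (peval p4 (INR n)) (INR (k n) / INR n)
           * exp (- 2 * INR n * (h - delta))
           * gamma ^ (2 * (k n - n + 1) - j).
Proof.
have Hg : 0 < gamma < 1 by have := isInf_gamma0Set_ge0 Hg0; lra.
have [x _] := HX.
have [N1 HN1] := Hk1 (1 / 2) ltac:(lra).
have [N2 HN2] := Hk2 1 Rlt_0_1.
exists (nseq 33 0 ++ [:: (10 * K ^ 4 * (/ gamma) ^ (2 * n0 + 2)) ^ 11]), (maxn (maxn N1 N2) 3).
move=> n HN j _ Hj; rewrite peval_monomial.
have Hrhs : 0 <= exp (- 2 * INR n * (h - delta)) * gamma ^ (2 * (k n - n + 1) - j).
  by apply: Rmult_le_pos; [apply/Rlt_le/exp_pos|apply: pow_le; lra].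
case: (posnP (k n)) => Hk0.
  rewrite muPair_Q_short; last by rewrite Hk0; lia.
  by rewrite Rmult_assoc; apply: Rmult_le_pos => //; rewrite /Rpower; apply/Rlt_le/exp_pos.
have Hk2n : (2 * n < k n)%N.
  by apply: twice_lt_of_ratio => //; have := HN1 n ltac:(apply/leP; lia); rewrite /R_dist Rminus_0_r.
have Hkn : (k n <= n * n)%N.
  by apply: le_sq_of_ratio; [lia|have := HN2 n ltac:(apply/leP; lia); rewrite /R_dist Rminus_0_r].
have Hm : (k n - n <= (k n %/ n).+1 * n)%N.
  have := divn_eq (k n) n; have := ltn_pmod (k n) (ltac:(lia) : (0 < n)%N).
  by rewrite mulSn; nia.
apply: Rle_trans (muPair_Q_le_coding_const (x 0%Z) h delta j Hmu HK1 Hqb Hg Hn0 _ _ Hm) _; try lia.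
rewrite Rmult_assoc [X in _ <= X]Rmult_assoc; apply: Rmult_le_compat_r => //.
by apply: coding_const_sq_le_Rpower => //; lia.
Qed.
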